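(* Let $\mathcal W=\{W_t\}_{t\in T}\subset CQ(\mathbf X,\mathcal H)$ with $|T|<\infty$, $p\in\mathfrak P(\mathbf X)$ and $l\in\mathbb N$, and let $\rho_l,\tau_l$ be the associated states defined below. If for some $\lambda\in[0,1]$ and $a>0$ there is a projection $q_l$ on $(\mathbb C^{|\mathbf X|})^{\otimes l}\otimes\mathcal H^{\otimes l}$ with $\mathrm{tr}(q_l\rho_l)\ge1-\lambda$ and $\mathrm{tr}(q_l\tau_l)\le2^{-la}$, then for every $\gamma$ with $0<\gamma\le a$ and $M_l:=\lfloor2^{l(a-\gamma)}\rfloor$ there exists an $(l,M_l)$-code $(x_m^l,D_m^l)_{m=1}^{M_l}$ with $$\max_{t\in T}\frac1{M_l}\sum_{m=1}^{M_l}\mathrm{tr}\big(W_t^{\otimes l}(x_m^l)(\mathbf 1-D_m^l)\big)\le|T|\big(2\lambda+4\cdot2^{-l\gamma}\big).$$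
   Context: $\mathbf X$ finite, $\mathcal H$ finite-dimensional complex Hilbert space, $CQ(\mathbf X,\mathcal H)$ the maps $\mathbf X\to\mathcal S(\mathcal H)$, $W^{\otimes l}(x^l)=W(x_1)\otimes\cdots\otimes W(x_l)$. Fix an orthonormal basis $\{e_x\}$ of $\mathbb C^{|\mathbf X|}$; identify $p$ with $\sum_xp(x)|e_x\rangle\langle e_x|$. Define $\rho_t:=\sum_xp(x)|e_x\rangle\langle e_x|\otimes W_t(x)$, $\sigma_t:=\sum_xp(x)W_t(x)$, $\hat\sigma_t:=p\otimes\sigma_t$, and with $v_l:(\mathbb C^{|\mathbf X|}\otimes\mathcal H)^{\otimes l}\to(\mathbb C^{|\mathbf X|})^{\otimes l}\otimes\mathcal H^{\otimes l}$ the isomorphism reordering tensor factors, $\rho_l:=\frac1{|T|}\sum_tv_l\rho_t^{\otimes l}v_l^*$ and $\tau_l:=\frac1{|T|}\sum_tv_l\hat\sigma_t^{\otimes l}v_l^*=p^{\otimes l}\otimes\frac1{|T|}\sum_t\sigma_t^{\otimes l}$. An $(l,M)$-code is $(x_m^l,D_m^l)_{m=1}^M$ with $x_m^l\in\mathbf X^l$, $D_m^l\ge0$ on $\mathcal H^{\otimes l}$, $\sum_mD_m^l\le\mathbf 1$. Logs base 2. *)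

(* Operators between finite-dimensional spaces are
   represented by their matrices in the canonical product bases, indexed by
   finite types. *)
From mathcomp Require Import all_boot all_order all_algebra.
From mathcomp Require Import reals exp.
From mathcomp Require Import complex.
Import Order.TTheory GRing.Theory Num.Theory.

Set Implicit Arguments.
Unset Strict Implicit.
Unset Printing Implicit Defensive.

Local Open Scope ring_scope.

Section QDefs.
Variable R : realType.
Local Notation C := R[i].

Definition mat (I J : finType) := I -> J -> C.

Definition mulm (I J K : finType) (A : mat I J) (B : mat J K) : mat I K :=
  fun i k => \sum_(j : J) A i j * B j k.

Definition adjm (I J : finType) (A : mat I J) : mat J I :=
  fun j i => (A i j)^*.

Definition idm (I : finType) : mat I I := fun i j => (i == j)%:R.

Definition subm (I J : finType) (A B : mat I J) : mat I J :=
  fun i j => A i j - B i j.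

Definition trm (I : finType) (A : mat I I) : C := \sum_(i : I) A i i.

Definition psd (I : finType) (A : mat I I) : Prop :=
  forall v : I -> C, 0 <= \sum_(i : I) \sum_(j : I) (v i)^* * A i j * v j.

Definition is_state (I : finType) (A : mat I I) : Prop :=
  psd A /\ trm A = 1.

Definition is_proj (I : finType) (Q : mat I I) : Prop :=
  (forall i j, adjm Q i j = Q i j) /\ (forall i j, mulm Q Q i j = Q i j).

Definition is_distr (X : finType) (p : X -> R) : Prop :=
  (forall x, 0 <= p x) /\ \sum_(x : X) p x = 1.

Definition tensm (I I' J J' : finType) (A : mat I I') (B : mat J J')
  : mat (I * J)%type (I' * J')%type :=
  fun ij ij' => A ij.1 ij'.1 * B ij.2 ij'.2.

Definition tprod (I : finType) (l : nat) (A : 'I_l -> mat I I)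
  : mat (l.-tuple I) (l.-tuple I) :=
  fun s s' => \prod_(k < l) A k (tnth s k) (tnth s' k).

Definition tpow (I : finType) (A : mat I I) (l : nat) := tprod (fun _ : 'I_l => A).

Definition ketbra (X : finType) (x : X) : mat X X :=
  fun i j => ((i == x) && (j == x))%:R.

Definition pop (X : finType) (p : X -> R) : mat X X :=
  fun i j => \sum_(x : X) (p x)%:C%C * ketbra x i j.

Definition Wpow (X : finType) (d l : nat) (W : X -> mat 'I_d 'I_d)
  (xs : l.-tuple X) : mat (l.-tuple 'I_d) (l.-tuple 'I_d) :=
  tprod (fun k => W (tnth xs k)).

Definition rho_t (X : finType) (d : nat) (p : X -> R) (Wt : X -> mat 'I_d 'I_d)
  : mat (X * 'I_d)%type (X * 'I_d)%type :=
  fun u u' => \sum_(x : X) (p x)%:C%C * tensm (ketbra x) (Wt x) u u'.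

Definition sigma_t (X : finType) (d : nat) (p : X -> R) (Wt : X -> mat 'I_d 'I_d)
  : mat 'I_d 'I_d :=
  fun i j => \sum_(x : X) (p x)%:C%C * Wt x i j.

Definition hsigma_t (X : finType) (d : nat) (p : X -> R) (Wt : X -> mat 'I_d 'I_d)
  : mat (X * 'I_d)%type (X * 'I_d)%type :=
  tensm (pop p) (sigma_t p Wt).

(* the reordering isomorphism
   v_l : (C^X (x) H)^{(x)l} -> (C^X)^{(x)l} (x) H^{(x)l},
   e_{(x_1,i_1)} (x) ... (x) e_{(x_l,i_l)} |-> (e_{x_1}(x)...(x)e_{x_l}) (x) (e_{i_1}(x)...(x)e_{i_l}) *)
Definition vl (X : finType) (d l : nat)
  : mat (l.-tuple X * l.-tuple 'I_d)%type (l.-tuple (X * 'I_d)%type) :=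
  fun u s => (u == (map_tuple fst s, map_tuple snd s))%:R.

Definition avg_conj (X T : finType) (d l : nat) (A : T -> mat (X * 'I_d)%type (X * 'I_d)%type)
  : mat (l.-tuple X * l.-tuple 'I_d)%type (l.-tuple X * l.-tuple 'I_d)%type :=
  fun u u' => (#|T|%:R)^-1 *
    \sum_(t : T) mulm (mulm (@vl X d l) (@tpow _ (A t) l)) (adjm (@vl X d l)) u u'.

Definition rho_l (X T : finType) (d l : nat) (p : X -> R)
  (W : T -> X -> mat 'I_d 'I_d) :=
  @avg_conj X T d l (fun t => rho_t p (W t)).

Definition tau_l (X T : finType) (d l : nat) (p : X -> R)
  (W : T -> X -> mat 'I_d 'I_d) :=
  @avg_conj X T d l (fun t => hsigma_t p (W t)).

Definition is_code (X : finType) (d l M : nat) (x : 'I_M -> l.-tuple X)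
  (D : 'I_M -> mat (l.-tuple 'I_d) (l.-tuple 'I_d)) : Prop :=
  (forall m, psd (D m)) /\
  psd (subm (@idm _) (fun i j => \sum_(m < M) D m i j)).

Definition avg_err (X : finType) (d l M : nat) (Wt : X -> mat 'I_d 'I_d)
  (x : 'I_M -> l.-tuple X) (D : 'I_M -> mat (l.-tuple 'I_d) (l.-tuple 'I_d)) : C :=
  (M%:R)^-1 * \sum_(m < M) trm (mulm (Wpow Wt (x m)) (subm (@idm _) (D m))).

End QDefs.

Arguments tpow {R I} A l.
Arguments vl {R X d l}.
Arguments avg_conj {R X T d} l A.
Arguments rho_l {R X T d} l p W.
Arguments tau_l {R X T d} l p W.

(* Random coding with the pretty good measurement.  Write S_x for the diagonal
   block of q at the classical string x.  For a codebook x_1 .. x_M decode with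
   D_m = B S_(x_m) B, where B = (sum_m S_(x_m))^(-1/2) (pseudo-inverse).  The
   Hayashi-Nagaoka inequality 1 - B S B <= 2 (1 - S) + 4 T, for S + T = A and
   0 <= S <= 1, bounds the error of codeword m by
   2 - 2 tr(W(x_m) S_(x_m)) + 4 sum_(j <> m) tr(W(x_m) S_(x_j)).
   Drawing the codewords i.i.d. from p^l, the expected bound is
   2 - 2 alpha_t + 4 (M - 1) beta_t, where
   |T|^-1 sum_t alpha_t = tr(q rho_l) >= 1 - lambda and
   |T|^-1 sum_t beta_t = tr(q tau_l) <= 2^(-l a).  A codebook doing no worse
   than the average for the sum over t of the bounds works for every t at the
   price of the factor |T|, and M 2^(-l a) <= 2^(-l gamma). *)

From mathcomp Require Import all_boot all_order all_algebra.
From mathcomp Require Import reals exp.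
From mathcomp Require Import complex.
From mathcomp Require Import spectral sesquilinear.
From Stdlib Require Import FunctionalExtensionality.
From mathcomp Require Import ring.
Import Order.TTheory GRing.Theory Num.Theory.
Local Open Scope ring_scope.

Set Implicit Arguments.
Unset Strict Implicit.
Unset Printing Implicit Defensive.

Section MatrixAlgebra.
Variable R : realType.
Local Notation C := R[i].

Lemma matP (I J : finType) (A B : mat R I J) :
  (forall i j, A i j = B i j) -> A = B.
Proof.
move=> h; apply: functional_extensionality => i.
by apply: functional_extensionality => j.
Qed.

Definition addm (I J : finType) (A B : mat R I J) : mat R I J :=
  fun i j => A i j + B i j.
Definition scalem (I J : finType) (c : C) (A : mat R I J) : mat R I J :=
  fun i j => c * A i j.

Lemma mulmA (I J K L : finType) (A : mat R I J) (B : mat R J K) (D : mat R K L) :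
  mulm (mulm A B) D = mulm A (mulm B D).
Proof.
apply: matP => i l; rewrite /mulm.
under eq_bigr do rewrite mulr_suml.
rewrite exchange_big /=; apply: eq_bigr => j _.
by rewrite mulr_sumr; apply: eq_bigr => k _; rewrite mulrA.
Qed.

Lemma mulmDl (I J K : finType) (A B : mat R I J) (D : mat R J K) :
  mulm (addm A B) D = addm (mulm A D) (mulm B D).
Proof.
apply: matP => i k; rewrite /mulm /addm -big_split /=.
by apply: eq_bigr => j _; rewrite mulrDl.
Qed.

Lemma mulmDr (I J K : finType) (A : mat R I J) (B D : mat R J K) :
  mulm A (addm B D) = addm (mulm A B) (mulm A D).
Proof.
apply: matP => i k; rewrite /mulm /addm -big_split /=.
by apply: eq_bigr => j _; rewrite mulrDr.
Qed.

Lemma mulmBl (I J K : finType) (A B : mat R I J) (D : mat R J K) :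
  mulm (subm A B) D = subm (mulm A D) (mulm B D).
Proof.
apply: matP => i k; rewrite /mulm /subm -sumrB.
by apply: eq_bigr => j _; rewrite mulrBl.
Qed.

Lemma mulmBr (I J K : finType) (A : mat R I J) (B D : mat R J K) :
  mulm A (subm B D) = subm (mulm A B) (mulm A D).
Proof.
apply: matP => i k; rewrite /mulm /subm -sumrB.
by apply: eq_bigr => j _; rewrite mulrBr.
Qed.

Lemma mulmZl (I J K : finType) c (A : mat R I J) (D : mat R J K) :
  mulm (scalem c A) D = scalem c (mulm A D).
Proof.
apply: matP => i k; rewrite /mulm /scalem mulr_sumr.
by apply: eq_bigr => j _; rewrite mulrA.
Qed.

Lemma mulmZr (I J K : finType) c (A : mat R I J) (D : mat R J K) :
  mulm A (scalem c D) = scalem c (mulm A D).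
Proof.
apply: matP => i k; rewrite /mulm /scalem mulr_sumr.
by apply: eq_bigr => j _; rewrite mulrCA.
Qed.

Lemma mul1m (I J : finType) (A : mat R I J) : mulm (@idm R I) A = A.
Proof.
apply: matP => i j; rewrite /mulm /idm (bigD1 i) //= eqxx mul1r big1 ?addr0 //.
by move=> k /negbTE; rewrite eq_sym => ->; rewrite mul0r.
Qed.

Lemma mulm1 (I J : finType) (A : mat R I J) : mulm A (@idm R J) = A.
Proof.
apply: matP => i j; rewrite /mulm /idm (bigD1 j) //= eqxx mulr1 big1 ?addr0 //.
by move=> k /negbTE ->; rewrite mulr0.
Qed.

Lemma mulm_sumr (I J L K : finType) (P : pred K) (A : mat R I J) (F : K -> mat R J L) :
  mulm A (fun i j => \sum_(k | P k) F k i j) = fun i j => \sum_(k | P k) mulm A (F k) i j.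
Proof.
apply: matP => i j; rewrite /mulm.
under eq_bigr do rewrite mulr_sumr.
by rewrite exchange_big.
Qed.

Lemma mulm_suml (I J L K : finType) (P : pred K) (F : K -> mat R I J) (A : mat R J L) :
  mulm (fun i j => \sum_(k | P k) F k i j) A = fun i j => \sum_(k | P k) mulm (F k) A i j.
Proof.
apply: matP => i j; rewrite /mulm.
under eq_bigr do rewrite mulr_suml.
by rewrite exchange_big.
Qed.

Lemma adjmB (I J : finType) (A B : mat R I J) :
  adjm (subm A B) = subm (adjm A) (adjm B).
Proof. by apply: matP => i j; rewrite /adjm /subm rmorphB. Qed.

Lemma adjm1 (I : finType) : adjm (@idm R I) = @idm R I.
Proof.
apply: matP => i j; rewrite /adjm /idm eq_sym.
by case: (_ == _); rewrite ?conjC1 ?conjC0.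
Qed.

Lemma trmD (I : finType) (A B : mat R I I) : trm (addm A B) = trm A + trm B.
Proof. by rewrite /trm /addm big_split. Qed.

Lemma trmB (I : finType) (A B : mat R I I) : trm (subm A B) = trm A - trm B.
Proof. by rewrite /trm /subm sumrB. Qed.

Lemma trmZ (I : finType) c (A : mat R I I) : trm (scalem c A) = c * trm A.
Proof. by rewrite /trm /scalem mulr_sumr. Qed.

Lemma trm_sum (I K : finType) (P : pred K) (F : K -> mat R I I) :
  trm (fun i j => \sum_(k | P k) F k i j) = \sum_(k | P k) trm (F k).
Proof. by rewrite /trm exchange_big. Qed.

End MatrixAlgebra.

Section PositiveSemidefinite.
Variable R : realType.
Local Notation C := R[i].

Definition qform (I : finType) (A : mat R I I) (v : I -> C) :=
  \sum_(i : I) \sum_(j : I) (v i)^* * A i j * v j.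

Definition mulmv (I J : finType) (A : mat R I J) (v : J -> C) : I -> C :=
  fun i => \sum_j A i j * v j.

Lemma qform_mulmv (I : finType) (A : mat R I I) v :
  qform A v = \sum_i (v i)^* * mulmv A v i.
Proof.
rewrite /qform /mulmv; apply: eq_bigr => i _; rewrite mulr_sumr.
by apply: eq_bigr => j _; rewrite mulrA.
Qed.

Lemma exchange_big2 (I1 I2 I3 I4 : finType) (F : I1 -> I2 -> I3 -> I4 -> C) :
  \sum_a \sum_b \sum_c \sum_d F a b c d = \sum_c \sum_d \sum_a \sum_b F a b c d.
Proof.
under eq_bigr do rewrite exchange_big /=.
rewrite exchange_big /=; apply: eq_bigr => c _.
under eq_bigr do rewrite exchange_big /=.
by rewrite exchange_big.
Qed.

Lemma qform_conj (I J : finType) (A : mat R I I) (X : mat R I J) v :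
  qform (mulm (mulm (adjm X) A) X) v = qform A (mulmv X v).
Proof.
rewrite /qform /mulmv /mulm /adjm.
have -> : \sum_l \sum_k (\sum_i X l i * v i)^* * A l k * (\sum_j X k j * v j) =
  \sum_l \sum_k \sum_i \sum_j (v i)^* * (X l i)^* * A l k * X k j * v j.
  apply: eq_bigr => l _; apply: eq_bigr => k _.
  rewrite rmorph_sum /= mulr_suml mulr_suml; apply: eq_bigr => i _.
  by rewrite mulr_sumr; apply: eq_bigr => j _; rewrite rmorphM /=; ring.
rewrite exchange_big2; apply: eq_bigr => i _; apply: eq_bigr => j _.
rewrite mulr_sumr mulr_suml [RHS]exchange_big; apply: eq_bigr => k _.
by rewrite mulr_suml mulr_sumr mulr_suml; apply: eq_bigr => l _; ring.
Qed.

Lemma qformD (I : finType) (A B : mat R I I) v :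
  qform (addm A B) v = qform A v + qform B v.
Proof.
rewrite /qform /addm -big_split /=; apply: eq_bigr => i _.
by rewrite -big_split /=; apply: eq_bigr => j _; ring.
Qed.

Lemma qformB (I : finType) (A B : mat R I I) v :
  qform (subm A B) v = qform A v - qform B v.
Proof.
rewrite /qform /subm -sumrB; apply: eq_bigr => i _.
by rewrite -sumrB; apply: eq_bigr => j _; ring.
Qed.

Lemma qform_sum (I K : finType) (P : pred K) (F : K -> mat R I I) v :
  qform (fun i j => \sum_(k | P k) F k i j) v = \sum_(k | P k) qform (F k) v.
Proof.
rewrite /qform.
under eq_bigr do (under eq_bigr do rewrite mulr_sumr mulr_suml; rewrite exchange_big /=).
by rewrite exchange_big.
Qed.

Lemma psd_conj (I J : finType) (A : mat R I I) (X : mat R I J) :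
  psd A -> psd (mulm (mulm (adjm X) A) X).
Proof. by move=> hA v; rewrite -/(qform _ v) qform_conj; apply: hA. Qed.

Lemma psdD (I : finType) (A B : mat R I I) : psd A -> psd B -> psd (addm A B).
Proof.
by move=> hA hB v; rewrite -/(qform _ v) qformD; apply: addr_ge0; [apply: hA | apply: hB].
Qed.

Lemma psdZ (I : finType) c (A : mat R I I) : 0 <= c -> psd A -> psd (scalem c A).
Proof.
move=> hc hA v; rewrite -/(qform _ v) /qform /scalem.
under eq_bigr do (under eq_bigr do rewrite mulrCA -mulrA; rewrite -mulr_sumr).
by rewrite -mulr_sumr; apply: mulr_ge0 => //; apply: hA.
Qed.

Lemma psd_sum (I K : finType) (P : pred K) (F : K -> mat R I I) :
  (forall k, psd (F k)) -> psd (fun i j => \sum_(k | P k) F k i j).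
Proof.
by move=> hF v; rewrite -/(qform _ v) qform_sum; apply: sumr_ge0 => k _; apply: hF.
Qed.

Lemma psd_gram (I K : finType) (mu : K -> C) (w : K -> I -> C) :
  (forall k, 0 <= mu k) -> psd (fun i j => \sum_k mu k * w k i * (w k j)^*).
Proof.
move=> hmu v; rewrite -/(qform _ v).
have -> : qform (fun i j => \sum_k mu k * w k i * (w k j)^*) v =
   \sum_k mu k * ((\sum_i (v i)^* * w k i) * (\sum_i (v i)^* * w k i)^*).
  rewrite qform_sum; apply: eq_bigr => k _; rewrite /qform.
  rewrite rmorph_sum /= mulr_suml mulr_sumr; apply: eq_bigr => i _.
  rewrite mulr_sumr mulr_sumr; apply: eq_bigr => j _.
  by rewrite rmorphM /= conjCK; ring.
by apply: sumr_ge0 => k _; apply: mulr_ge0 => //; apply: mul_conjC_ge0.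
Qed.

Lemma psd1 (I : finType) : psd (@idm R I).
Proof.
move=> v; apply: sumr_ge0 => i _.
rewrite /idm (bigD1 i) //= eqxx mulr1 big1 ?addr0.
  by rewrite mulrC; apply: mul_conjC_ge0.
by move=> j /negbTE; rewrite eq_sym => ->; rewrite mulr0 mul0r.
Qed.

Lemma sum_delta (A : finType) (a : A) (F : A -> C) :
  \sum_x (x == a)%:R * F x = F a.
Proof.
rewrite (bigD1 a) //= eqxx mul1r big1 ?addr0 // => x /negbTE ->.
by rewrite mul0r.
Qed.

Lemma sum_pair (A B : finType) (F : A * B -> C) :
  \sum_u F u = \sum_a \sum_b F (a, b).
Proof. by rewrite pair_big; apply: eq_bigr => -[]. Qed.

Lemma sum_pair_delta (I K : finType) (x : K) (F : K * I -> C) :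
  \sum_(u : K * I) (u.1 == x)%:R * F u = \sum_b F (x, b).
Proof.
rewrite sum_pair /=; under eq_bigr do rewrite -mulr_sumr.
by rewrite (sum_delta x (fun a => \sum_b F (a, b))).
Qed.

Lemma psd_block (I K : finType) (Q : mat R (K * I)%type (K * I)%type) (x : K) :
  psd Q -> psd (fun i j => Q (x, i) (x, j)).
Proof.
move=> hQ v; rewrite -/(qform _ v).
pose w (u : K * I) := (u.1 == x)%:R * v u.2.
suff -> : qform (fun i j => Q (x, i) (x, j)) v = qform Q w by apply: hQ.
have e u u' : (w u)^* * Q u u' * w u' =
    (u.1 == x)%:R * ((u'.1 == x)%:R * ((v u.2)^* * Q u u' * v u'.2)).
  by rewrite /w rmorphM rmorph_nat /=; ring.
rewrite [RHS]/qform; under eq_bigr => u _ do (under eq_bigr do rewrite e;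
  rewrite -mulr_sumr (sum_pair_delta x (fun u' => (v u.2)^* * Q u u' * v u'.2))).
by rewrite (sum_pair_delta x (fun u => \sum_b (v u.2)^* * Q u (x, b) * v (x, b).2)).
Qed.

Lemma proj_psd (I : finType) (Q : mat R I I) :
  is_proj Q -> psd Q /\ psd (subm (@idm R I) Q).
Proof.
move=> [hadj hidem].
have Qa : adjm Q = Q by apply: matP.
have QQ : mulm Q Q = Q by apply: matP.
have E : mulm (mulm (adjm (subm (@idm R I) Q)) (@idm R I)) (subm (@idm R I) Q) =
    subm (@idm R I) Q.
  rewrite mulm1 adjmB adjm1 Qa mulmBl !mulmBr !mul1m mulm1 QQ.
  by apply: matP => i j; rewrite /subm; ring.
split; last by rewrite -E; apply/psd_conj/psd1.
suff <- : mulm (mulm (adjm Q) (@idm R I)) Q = Q by apply/psd_conj/psd1.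
by rewrite mulm1 Qa QQ.
Qed.

End PositiveSemidefinite.

Section FunctionalCalculus.
Variable R : realType.
Local Notation C := R[i].
Variable N : finType.
Variables (u : N -> N -> C) (lam : N -> C).

Definition orthonormal := forall k k', \sum_i (u k i)^* * u k' i = (k == k')%:R.
Definition resolves_identity := forall i j, \sum_k u k i * (u k j)^* = (i == j)%:R.

(* f(A) for A = sum_k lam_k u_k u_k^*, the rows u_k of u being the eigenvectors. *)
Definition fc (f : C -> C) : mat R N N :=
  fun i j => \sum_k f (lam k) * u k i * (u k j)^*.

Lemma fc_ext f g : (forall k, f (lam k) = g (lam k)) -> fc f = fc g.
Proof. by move=> h; apply: matP => i j; apply: eq_bigr => k _; rewrite h. Qed.

Lemma fcB f g : fc (fun x => f x - g x) = subm (fc f) (fc g).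
Proof. by apply: matP => i j; rewrite /fc /subm -sumrB; apply: eq_bigr => k _; ring. Qed.

Lemma fc_adj f : (forall k, (f (lam k))^* = f (lam k)) -> adjm (fc f) = fc f.
Proof.
move=> h; apply: matP => i j; rewrite /adjm /fc rmorph_sum; apply: eq_bigr => k _.
by rewrite !rmorphM /= conjCK h; ring.
Qed.

Lemma fc_psd f : (forall k, 0 <= f (lam k)) -> psd (fc f).
Proof. exact: psd_gram. Qed.

Lemma fc1 : resolves_identity -> fc (fun _ => 1) = @idm R N.
Proof.
move=> comp; apply: matP => i j; rewrite /fc /idm -comp.
by apply: eq_bigr => k _; rewrite mul1r.
Qed.

Hypothesis orth : orthonormal.

Lemma fcM f g : mulm (fc f) (fc g) = fc (fun x => f x * g x).
Proof.
apply: matP => i l; rewrite /mulm /fc.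
have -> : \sum_j (\sum_k f (lam k) * u k i * (u k j)^*) *
                 (\sum_k g (lam k) * u k j * (u k l)^*) =
  \sum_k \sum_k' f (lam k) * g (lam k') * u k i * (u k' l)^* *
        (\sum_j (u k j)^* * u k' j).
  under eq_bigr do rewrite mulr_suml.
  rewrite exchange_big /=; apply: eq_bigr => k _.
  under eq_bigr do rewrite mulr_sumr.
  rewrite exchange_big /=; apply: eq_bigr => k' _.
  by rewrite mulr_sumr; apply: eq_bigr => j _; ring.
apply: eq_bigr => k _.
rewrite (bigD1 k) //= orth eqxx big1 ?addr0; first by rewrite mulr1; ring.
by move=> k' /negbTE; rewrite orth eq_sym => ->; rewrite mulr0.
Qed.

Lemma fc_eigvec f k : mulmv (fc f) (u k) = fun i => f (lam k) * u k i.
Proof.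
apply: functional_extensionality => i; rewrite /mulmv /fc.
under eq_bigr do rewrite mulr_suml.
rewrite exchange_big /= (bigD1 k) //= [X in _ + X]big1 ?addr0.
  by under eq_bigr do rewrite -mulrA; rewrite -mulr_sumr orth eqxx mulr1.
move=> k' /negbTE hk'.
by under eq_bigr do rewrite -mulrA; rewrite -mulr_sumr orth hk' mulr0.
Qed.

Lemma qform_fc_eigvec f k : qform (fc f) (u k) = f (lam k).
Proof.
rewrite qform_mulmv fc_eigvec.
under eq_bigr do rewrite mulrCA.
by rewrite -mulr_sumr orth eqxx mulr1.
Qed.

End FunctionalCalculus.

Section Hermitian.
Variable R : realType.
Local Notation C := R[i].
Variable N : finType.
Implicit Types (A : mat R N N).

Definition herm A := forall i j, A j i = (A i j)^*.

Lemma herm_adjm A : herm A -> adjm A = A.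
Proof. by move=> h; apply: matP => i j; rewrite /adjm h conjCK. Qed.

Lemma hermB A B : herm A -> herm B -> herm (subm A B).
Proof. by move=> hA hB i j; rewrite /subm rmorphB /= hA hB. Qed.

Lemma qform_two_point A i j (a b : C) :
  qform A (fun k => (k == i)%:R * a + (k == j)%:R * b) =
  a^* * a * A i i + a^* * b * A i j + b^* * a * A j i + b^* * b * A j j.
Proof.
have sd (c : C) (F : N -> C) x : \sum_k (k == x)%:R * c * F k = c * F x.
  by under eq_bigr do rewrite -mulrA; rewrite (sum_delta x (fun k => c * F k)).
rewrite /qform.
have -> : \sum_i0 \sum_j0 ((i0 == i)%:R * a + (i0 == j)%:R * b)^* * A i0 j0 *
    ((j0 == i)%:R * a + (j0 == j)%:R * b) =
  \sum_i0 ((i0 == i)%:R * a^* + (i0 == j)%:R * b^*) *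
    (\sum_j0 ((j0 == i)%:R * (A i0 j0 * a) + (j0 == j)%:R * (A i0 j0 * b))).
  apply: eq_bigr => i0 _; rewrite mulr_sumr; apply: eq_bigr => j0 _.
  by rewrite rmorphD !rmorphM /= !rmorph_nat; ring.
under eq_bigr do rewrite big_split /= !sum_delta mulrDl.
by rewrite big_split /= !sd; ring.
Qed.

Lemma psd_herm A : psd A -> herm A.
Proof.
move=> hA i j.
pose e (a b : C) := fun k : N => (k == i)%:R * a + (k == j)%:R * b.
have real_qform a b : (qform A (e a b))^* = qform A (e a b).
  by have /ger0_real := hA (e a b); rewrite CrealE => /eqP.
have hii : (A i i)^* = A i i.
  have := real_qform 1 0; rewrite /e qform_two_point.
  by rewrite !rmorph0 !rmorph1 !mulr0 !mul0r !addr0 !mul1r.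
have hjj : (A j j)^* = A j j.
  have := real_qform 0 1; rewrite /e qform_two_point.
  by rewrite !rmorph0 !rmorph1 !mulr0 !mul0r !add0r !mul1r.
have e1 := real_qform 1 1; rewrite /e qform_two_point rmorph1 !mul1r in e1.
have e2 := real_qform 1 'i; rewrite /e qform_two_point rmorph1 !mul1r in e2.
rewrite !rmorphD !rmorphM /= hii hjj conjCi in e1 e2.
have ii : 'i * 'i = -1 :> C by rewrite -expr2 sqrCi.
have ci : (- 'i)^* = 'i :> C by rewrite raddfN /= conjCi opprK.
rewrite ci rmorph1 in e2.
set x := A i j in e1 e2 *; set y := A j i in e1 e2 *.
have E1 : (A i i + x^* + y^* + A j j) - (A i i + x + y + A j j) = 0.
  by rewrite e1 subrr.
have E2 : (A i i + - 'i * x^* + 'i * 1 * y^* + 'i * - 'i * A j j) -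
    (A i i + 'i * x + - 'i * 1 * y + - 'i * 'i * A j j) = 0.
  by rewrite e2 subrr.
(* Reality of the two-point forms at (1,1) and (1,i) forces A_ji = conj A_ij. *)
have key : 2 * (y - x^*) =
   - ((A i i + x^* + y^* + A j j) - (A i i + x + y + A j j)) -
   'i * ((A i i + - 'i * x^* + 'i * 1 * y^* + 'i * - 'i * A j j) -
   (A i i + 'i * x + - 'i * 1 * y + - 'i * 'i * A j j)) -
   ('i * 'i + 1) * (x^* - y^* + x - y) by ring.
rewrite E1 E2 ii addNr oppr0 mulr0 mul0r !subr0 in key.
by move/eqP: key; rewrite mulf_eq0 pnatr_eq0 /= subr_eq0 => /eqP.
Qed.

Lemma sum_enum_val (F : N -> C) : \sum_k F k = \sum_(c < #|N|) F (enum_val c).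
Proof. by rewrite -big_enum_val. Qed.

Lemma herm_spectral A : herm A ->
  exists (u : N -> N -> C) (lam : N -> C),
   [/\ forall k, lam k \is Num.real, orthonormal u, resolves_identity u &
       A = fc u lam id].
Proof.
move=> hH.
pose n := #|N|.
pose Hm : 'M[C]_n := \matrix_(a, b) A (enum_val a) (enum_val b).
have Hherm : Hm \is hermsymmx.
  apply/is_hermitianmxP; rewrite expr0 scale1r.
  by apply/matrixP => a b; rewrite !mxE hH.
have := hermitian_spectral_diag_real Hherm.
have /orthomx_spectralP := hermitian_normalmx Hherm.
set P := spectralmx Hm; set sp := spectral_diag Hm => Heq spreal.
have Pu : P \is unitarymx by apply: spectral_unitarymx.
have PPt : P *m P^t*%sesqui = 1%:M by apply/unitarymxP.
have PtP : (P^t*)%sesqui *m P = 1%:M.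
  by rewrite -invmx_unitary // mulVmx // spectral_unit.
rewrite invmx_unitary // in Heq.
exists (fun k i => (P (enum_rank k) (enum_rank i))^*), (fun k => sp 0 (enum_rank k)).
split.
- by move=> k; apply: (mxOverP spreal).
- move=> k k'.
  have := congr1 (fun M : 'M[C]_n => M (enum_rank k) (enum_rank k')) PPt.
  rewrite !mxE (inj_eq (can_inj enum_rankK)) => <-.
  by rewrite sum_enum_val; apply: eq_bigr => c _; rewrite !mxE conjCK enum_valK.
- move=> i j.
  have := congr1 (fun M : 'M[C]_n => M (enum_rank i) (enum_rank j)) PtP.
  rewrite !mxE (inj_eq (can_inj enum_rankK)) => <-.
  rewrite sum_enum_val; apply: eq_bigr => c _; rewrite !mxE conjCK enum_valK.
  by rewrite mulrC.
- apply: matP => i j.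
  have := congr1 (fun M : 'M[C]_n => M (enum_rank i) (enum_rank j)) Heq.
  rewrite !mxE !enum_rankK => ->.
  rewrite /fc [RHS]sum_enum_val; apply: eq_bigr => c _.
  by rewrite !enum_valK mul_mx_diag !mxE conjCK; ring.
Qed.

Lemma psd_spectral A : psd A ->
  exists (u : N -> N -> C) (lam : N -> C),
   [/\ forall k, 0 <= lam k, orthonormal u, resolves_identity u & A = fc u lam id].
Proof.
move=> hA; have [u [lam [_ orth comp Aeq]]] := herm_spectral (psd_herm hA).
exists u, lam; split => // k.
by have := hA (u k); rewrite -/(qform _ _) Aeq qform_fc_eigvec.
Qed.

Lemma trm_psd_ge0 (V Z : mat R N N) : psd V -> psd Z ->
  0 <= trm (mulm V Z).
Proof.
move=> hV hZ; have [u [lam [lge0 _ _ ->]]] := psd_spectral hV.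
have -> : trm (mulm (fc u lam id) Z) = \sum_k lam k * qform Z (u k).
  rewrite /trm /mulm /qform /fc.
  under eq_bigr do (under eq_bigr do rewrite mulr_suml; rewrite exchange_big /=).
  rewrite exchange_big /=; apply: eq_bigr => k _.
  rewrite exchange_big mulr_sumr; apply: eq_bigr => j _.
  by rewrite mulr_sumr; apply: eq_bigr => i _; ring.
by apply: sumr_ge0 => k _; apply: mulr_ge0 => //; apply: hZ.
Qed.

End Hermitian.

Section OperatorInequalities.
Variable R : realType.
Local Notation C := R[i].
Variable N : finType.
Implicit Types (A B Q S T : mat R N N).
Local Notation I1 := (@idm R N).

Ltac mulm_expand := repeat first [rewrite mulmBl | rewrite mulmBr | rewrite mulmDl
  | rewrite mulmDr | rewrite mulmZl | rewrite mulmZr | rewrite mul1m | rewrite mulm1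
  | rewrite mulmA].

Lemma qform_mulm A B v :
  qform (mulm A B) v = \sum_l (\sum_i (v i)^* * A i l) * mulmv B v l.
Proof.
rewrite /qform /mulm /mulmv.
under eq_bigr do (under eq_bigr do rewrite mulr_sumr mulr_suml; rewrite exchange_big /=).
rewrite exchange_big /=; apply: eq_bigr => l _.
rewrite mulr_suml; apply: eq_bigr => i _.
by rewrite mulr_sumr; apply: eq_bigr => j _; ring.
Qed.

Lemma herm_row A v l : herm A -> \sum_i (v i)^* * A i l = (mulmv A v l)^*.
Proof.
move=> h; rewrite /mulmv rmorph_sum; apply: eq_bigr => i _.
by rewrite rmorphM /= -h mulrC.
Qed.

(* An eigenvector v of Q - S with eigenvalue mu < 0 would give
   <v, (Q^2 - S^2) v> = mu (<v, Q v> + <v, S v>), since Q^2 - S^2 = (Q - S) Q + S (Q - S);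
   positivity then forces <v, Q v> = <v, S v> = 0, hence mu = <v, (Q - S) v> = 0. *)
Lemma psd_sqrt_mono S Q : psd S -> psd Q ->
  psd (subm (mulm Q Q) (mulm S S)) -> psd (subm Q S).
Proof.
move=> hS hQ hQS.
have hQS_herm := hermB (psd_herm hQ) (psd_herm hS).
have [u [mu [mureal orth _ Heq]]] := herm_spectral hQS_herm.
suff mu_ge0 k : 0 <= mu k by rewrite Heq; apply: fc_psd.
rewrite real_leNgt ?real0 ?mureal //; apply/negP => mu_lt0.
set v := u k.
have Hv : mulmv (subm Q S) v = fun i => mu k * v i by rewrite Heq fc_eigvec.
have muc : (mu k)^* = mu k by apply/eqP; rewrite -CrealE mureal.
have QS_split : subm (mulm Q Q) (mulm S S) =
    addm (mulm (subm Q S) Q) (mulm S (subm Q S)).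
  by rewrite mulmBl mulmBr; apply: matP => i j; rewrite /subm /addm; ring.
have q1 : qform (mulm (subm Q S) Q) v = mu k * qform Q v.
  rewrite qform_mulm qform_mulmv mulr_sumr; apply: eq_bigr => l _.
  by rewrite (herm_row _ _ hQS_herm) Hv rmorphM /= muc mulrA.
have q2 : qform (mulm S (subm Q S)) v = mu k * qform S v.
  rewrite qform_mulm [qform S v]/qform exchange_big mulr_sumr; apply: eq_bigr => l _.
  by rewrite Hv mulr_suml mulr_sumr; apply: eq_bigr => i _; ring.
have := hQS v; rewrite -/(qform _ v) QS_split qformD q1 q2 -mulrDr nmulr_rge0 // => hle.
have qQ := hQ v; have qS := hS v; rewrite -/(qform _ v) in qQ qS.
have hS0 : qform S v = 0.
  by apply/eqP; rewrite eq_le qS andbT; apply: le_trans hle; rewrite lerDr.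
have hQ0 : qform Q v = 0.
  by apply/eqP; rewrite eq_le qQ andbT; apply: le_trans hle; rewrite lerDl.
have := qformB Q S v; rewrite Heq qform_fc_eigvec // hQ0 hS0 subrr => mu0.
by rewrite mu0 ltxx in mu_lt0.
Qed.

Lemma psd_sub_sq S : psd S -> psd (subm I1 S) -> psd (subm S (mulm S S)).
Proof.
move=> hS h1S.
have hSa : adjm S = S by apply/herm_adjm/psd_herm.
have h1a : adjm (subm I1 S) = subm I1 S by rewrite adjmB adjm1 hSa.
have -> : subm S (mulm S S) =
    addm (mulm (mulm (adjm (subm I1 S)) S) (subm I1 S))
         (mulm (mulm (adjm S) (subm I1 S)) S).
  by rewrite h1a hSa; mulm_expand; apply: matP => i j; rewrite /subm /addm; ring.
by apply: psdD; apply: psd_conj.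
Qed.

(* Q = A^(1/2) and B = its pseudo-inverse, both functions of A; B A B is the
   projection onto the support of A. *)
Lemma psd_sqrt_pinv A : psd A -> exists B Q,
  [/\ adjm B = B, psd Q, mulm Q Q = A, mulm B A = Q & mulm A B = Q] /\
  psd (subm I1 (mulm (mulm B A) B)).
Proof.
move=> hA; have [u [lam [lge0 orth comp ->]]] := psd_spectral hA.
pose Q := fc u lam sqrtC; pose B := fc u lam (fun x => (sqrtC x)^-1).
have sqrtK k : sqrtC (lam k) * sqrtC (lam k) = lam k by rewrite -expr2 sqrtCK.
have sqrt_real k : (sqrtC (lam k))^* = sqrtC (lam k).
  by apply/eqP; rewrite -CrealE sqrtC_real.
have inv_sqrt k : (sqrtC (lam k))^-1 * lam k = sqrtC (lam k).
  rewrite -[X in _ * X = _]sqrtK.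
  have [->|s0] := eqVneq (sqrtC (lam k)) 0; first by rewrite invr0 mul0r.
  by rewrite mulrA mulVf // mul1r.
have BA : mulm B (fc u lam id) = Q by rewrite fcM //; apply: fc_ext.
exists B, Q; split; first split.
- by apply: fc_adj => k; rewrite fmorphV /= sqrt_real.
- by apply: fc_psd => k; rewrite sqrtC_ge0.
- by rewrite fcM //; apply: fc_ext.
- exact: BA.
- by rewrite fcM //; apply: fc_ext => k /=; rewrite mulrC inv_sqrt.
- rewrite BA fcM // -(@fc1 _ _ _ lam comp) -fcB; apply: fc_psd => k.
  have [->|s0] := eqVneq (sqrtC (lam k)) 0; first by rewrite mul0r subr0 ler01.
  by rewrite mulfV // subrr.
Qed.

Section HayashiNagaoka.
Variables A B Q : mat R N N.
Hypotheses (B_adj : adjm B = B) (Q_psd : psd Q) (QQ : mulm Q Q = A).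
Hypotheses (BA : mulm B A = Q) (AB : mulm A B = Q).
Hypothesis BAB_le1 : psd (subm I1 (mulm (mulm B A) B)).

(* 2 (1 - S) + 4 T - (1 - B S B) is the sum of the positive operators
   1 - B A B, 4 (A^(1/2) - S), X^* T X and 2 Y^* S Y with X = 2 - B, Y = B - 1. *)
Lemma hayashi_nagaoka S T : psd S -> psd (subm I1 S) -> psd T -> A = addm S T ->
  psd (subm (addm (scalem 2 (subm I1 S)) (scalem 4 T)) (subm I1 (mulm (mulm B S) B))).
Proof.
move=> hS h1S hT AST.
have hQS : psd (subm Q S).
  apply: psd_sqrt_mono => //.
  have -> : subm (mulm Q Q) (mulm S S) = addm T (subm S (mulm S S)).
    by rewrite QQ AST; apply: matP => i j; rewrite /subm /addm; ring.
  by apply: psdD => //; apply: psd_sub_sq.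
pose X := subm (scalem 2 I1) B; pose Y := subm B I1.
have Xad : adjm X = X.
  rewrite /X adjmB B_adj; congr subm; apply: matP => i j.
  by rewrite /adjm /scalem /idm rmorphM /= !rmorph_nat eq_sym.
have Yad : adjm Y = Y by rewrite /Y adjmB adjm1 B_adj.
have eBT i j : mulm B T i j = Q i j - mulm B S i j.
  by rewrite -BA AST mulmDr /addm; ring.
have eTB i j : mulm T B i j = Q i j - mulm S B i j.
  by rewrite -AB AST mulmDl /addm; ring.
have eBTB i j : mulm B (mulm T B) i j =
    mulm B (mulm A B) i j - mulm B (mulm S B) i j.
  by rewrite AST mulmDl mulmDr /addm; ring.
have -> : subm (addm (scalem 2 (subm I1 S)) (scalem 4 T)) (subm I1 (mulm (mulm B S) B)) =
    addm (addm (addm (subm I1 (mulm (mulm B A) B)) (scalem 4 (subm Q S)))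
      (mulm (mulm (adjm X) T) X)) (scalem 2 (mulm (mulm (adjm Y) S) Y)).
  rewrite Xad Yad /X /Y; mulm_expand; apply: matP => i j.
  by rewrite /subm /addm /scalem ?eBT ?eTB ?eBTB; ring.
apply: psdD; [apply: psdD; [apply: psdD|]|].
- exact: BAB_le1.
- by apply: psdZ => //; rewrite ler0n.
- exact: psd_conj.
- by apply: psdZ; [rewrite ler0n | apply: psd_conj].
Qed.

End HayashiNagaoka.

End OperatorInequalities.

Section TensorPowers.
Variable R : realType.
Local Notation C := R[i].

Lemma sum_tuple_prod (I : finType) (l : nat) (F : 'I_l -> I -> C) :
  \sum_(s : l.-tuple I) \prod_(k < l) F k (tnth s k) = \prod_(k < l) \sum_(i : I) F k i.
Proof.
rewrite bigA_distr_bigA /=.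
rewrite (reindex (fun f : {ffun 'I_l -> I} => [tuple f k | k < l])) /=; last first.
  exists (fun s : l.-tuple I => [ffun k => tnth s k]) => [f _|s _].
  - by apply/ffunP => k; rewrite ffunE tnth_mktuple.
  - by apply: eq_from_tnth => k; rewrite tnth_mktuple ffunE.
by apply: eq_bigr => f _; apply: eq_bigr => k _; rewrite tnth_mktuple.
Qed.

Lemma prod_tnth_eq (I : finType) (l : nat) (s s' : l.-tuple I) (G : 'I_l -> C) :
  \prod_k ((tnth s k == tnth s' k)%:R * G k) = (s == s')%:R * \prod_k G k.
Proof.
have [->|ne] := eqVneq s s'.
  by rewrite mul1r; apply: eq_bigr => k _; rewrite eqxx mul1r.
have [k hk] : exists k, tnth s k != tnth s' k.
  apply/existsP; apply: contraR ne => /existsPn h.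
  by apply/eqP/eq_from_tnth => k; apply/eqP; have := h k; rewrite negbK.
by rewrite mul0r (bigD1 k) //= (negbTE hk) !mul0r.
Qed.

Lemma trm_tprod (I : finType) (l : nat) (A : 'I_l -> mat R I I) :
  trm (tprod A) = \prod_k trm (A k).
Proof. by rewrite /trm /tprod -(sum_tuple_prod (fun k i => A k i i)). Qed.

(* Expanding every factor spectrally writes the tensor product as a Gram form. *)
Lemma psd_tprod (I : finType) (l : nat) (A : 'I_l -> mat R I I) :
  (forall k, psd (A k)) -> psd (tprod A).
Proof.
move=> hA.
have : forall k, exists ul : (I -> I -> C) * (I -> C),
    (forall m, 0 <= ul.2 m) /\ A k = fc ul.1 ul.2 id.
  by move=> k; have [u [lam [h1 _ _ h2]]] := psd_spectral (hA k); exists (u, lam).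
move=> /fin_all_exists [UL hUL].
have -> : tprod A = fun s s' => \sum_(f : l.-tuple I)
    (\prod_k (UL k).2 (tnth f k)) *
    (\prod_k (UL k).1 (tnth f k) (tnth s k)) *
    (\prod_k (UL k).1 (tnth f k) (tnth s' k))^*.
  apply: matP => s s'; rewrite /tprod.
  under eq_bigr do rewrite (proj2 (hUL _)).
  rewrite -sum_tuple_prod; apply: eq_bigr => f _.
  by rewrite rmorph_prod -!big_split.
by apply: psd_gram => f; apply: prodr_ge0 => k _; exact: (proj1 (hUL k)).
Qed.

End TensorPowers.

Section ReorderedStates.
Variable R : realType.
Local Notation C := R[i].
Variables (X T : finType) (d l : nat).
Local Notation N := (l.-tuple 'I_d).
Local Notation Xl := (l.-tuple X).

Definition zip_tuple (u : Xl * N) : l.-tuple (X * 'I_d) :=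
  [tuple (tnth u.1 k, tnth u.2 k) | k < l].

Lemma vl_eq (u : Xl * N) (s : l.-tuple (X * 'I_d)) :
  (u == (map_tuple fst s, map_tuple snd s)) = (s == zip_tuple u).
Proof.
apply/eqP/eqP => [->|->].
  by apply: eq_from_tnth => k; rewrite tnth_mktuple /= !tnth_map; case: (tnth s k).
by case: u => xs ii; congr pair; apply: eq_from_tnth => k; rewrite tnth_map tnth_mktuple.
Qed.

Lemma vl_conj_entry (A : mat R (l.-tuple (X * 'I_d)) (l.-tuple (X * 'I_d))) u u' :
  mulm (mulm (@vl R X d l) A) (adjm (@vl R X d l)) u u' =
  A (zip_tuple u) (zip_tuple u').
Proof.
rewrite /mulm /adjm /vl.
under eq_bigr do (rewrite vl_eq; under eq_bigr do rewrite vl_eq).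
under eq_bigr do rewrite sum_delta.
rewrite (bigD1 (zip_tuple u')) //= eqxx rmorph1 mulr1 big1 ?addr0 //.
by move=> s /negbTE ->; rewrite rmorph0 mulr0.
Qed.

Variable p : X -> R.

Definition pprod (xs : Xl) : C := \prod_k (p (tnth xs k))%:C%C.

Variable q : mat R (Xl * N)%type (Xl * N)%type.

Definition qblock (xs : Xl) : mat R N N := fun i j => q (xs, i) (xs, j).

(* The states are block diagonal in the classical register, so only the
   diagonal blocks of q contribute. *)
Lemma trm_avg_conj (A : T -> mat R (X * 'I_d)%type (X * 'I_d)%type)
    (G : T -> Xl -> mat R N N) :
  (forall t xs ii xs' ii', tpow (A t) l (zip_tuple (xs, ii)) (zip_tuple (xs', ii')) =
       (xs == xs')%:R * pprod xs * G t xs ii ii') ->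
  trm (mulm q (avg_conj l A)) =
  (#|T|%:R)^-1 * \sum_t \sum_xs pprod xs * trm (mulm (G t xs) (qblock xs)).
Proof.
move=> hA.
have ae u' u : avg_conj l A u' u =
    (#|T|%:R)^-1 * \sum_t tpow (A t) l (zip_tuple u') (zip_tuple u).
  by rewrite /avg_conj; congr (_ * _); apply: eq_bigr => t _; rewrite vl_conj_entry.
rewrite /trm /mulm.
under eq_bigr do (under eq_bigr do rewrite ae mulrCA; rewrite -mulr_sumr).
rewrite -mulr_sumr; congr (_ * _).
under eq_bigr do (under eq_bigr do rewrite mulr_sumr; rewrite exchange_big /=).
rewrite exchange_big /=; apply: eq_bigr => t _.
rewrite sum_pair; apply: eq_bigr => xs _.
rewrite mulr_sumr.
have e ii xs' ii' :
    q (xs, ii) (xs', ii') * tpow (A t) l (zip_tuple (xs', ii')) (zip_tuple (xs, ii)) =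
    (xs' == xs)%:R * (q (xs, ii) (xs', ii') * pprod xs' * G t xs' ii' ii).
  by rewrite hA /=; ring.
under eq_bigr do (rewrite sum_pair; under eq_bigr do
  (under eq_bigr do rewrite e; rewrite -mulr_sumr); rewrite sum_delta).
rewrite exchange_big /=; apply: eq_bigr => ii' _.
by rewrite mulr_sumr; apply: eq_bigr => ii _; rewrite /qblock; ring.
Qed.

Variable W : T -> X -> mat R 'I_d 'I_d.

Lemma sum_ketbra (x x' : X) (F : X -> C) :
  \sum_y ketbra R y x x' * F y = (x == x')%:R * F x.
Proof.
rewrite /ketbra (bigD1 x) //= eqxx andTb eq_sym big1 ?addr0 // => y /negbTE hy.
by rewrite eq_sym hy mul0r.
Qed.

Lemma rho_t_entry (Wt : X -> mat R 'I_d 'I_d) x i x' i' :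
  rho_t p Wt (x, i) (x', i') = (x == x')%:R * ((p x)%:C%C * Wt x i i').
Proof.
rewrite /rho_t /tensm /= -(sum_ketbra x x' (fun y => (p y)%:C%C * Wt y i i')).
by apply: eq_bigr => y _; rewrite mulrCA mulrA.
Qed.

Lemma hsigma_t_entry (Wt : X -> mat R 'I_d 'I_d) x i x' i' :
  hsigma_t p Wt (x, i) (x', i') = (x == x')%:R * ((p x)%:C%C * sigma_t p Wt i i').
Proof.
rewrite /hsigma_t /tensm /pop /= mulrA -(sum_ketbra x x' (fun y => (p y)%:C%C)).
by congr (_ * _); apply: eq_bigr => y _; rewrite mulrC.
Qed.

Lemma tpow_rho_t_entry t (xs : Xl) ii xs' ii' :
  tpow (rho_t p (W t)) l (zip_tuple (xs, ii)) (zip_tuple (xs', ii')) =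
  (xs == xs')%:R * pprod xs * Wpow (W t) xs ii ii'.
Proof.
rewrite /tpow /tprod.
under eq_bigr do rewrite !tnth_mktuple /= rho_t_entry.
by rewrite prod_tnth_eq -mulrA big_split.
Qed.

Lemma tpow_hsigma_t_entry t (xs : Xl) ii xs' ii' :
  tpow (hsigma_t p (W t)) l (zip_tuple (xs, ii)) (zip_tuple (xs', ii')) =
  (xs == xs')%:R * pprod xs * \sum_ys pprod ys * Wpow (W t) ys ii ii'.
Proof.
rewrite /tpow /tprod.
under eq_bigr do rewrite !tnth_mktuple /= hsigma_t_entry.
rewrite prod_tnth_eq -mulrA big_split /=; congr (_ * (_ * _)).
rewrite /sigma_t -sum_tuple_prod; apply: eq_bigr => ys _.
by rewrite /Wpow /tprod /pprod -big_split.
Qed.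

Lemma trm_rho_l :
  trm (mulm q (rho_l l p W)) =
  (#|T|%:R)^-1 * \sum_t \sum_xs pprod xs * trm (mulm (Wpow (W t) xs) (qblock xs)).
Proof. by apply: trm_avg_conj => t xs ii xs' ii'; rewrite tpow_rho_t_entry. Qed.

Lemma trm_tau_l :
  trm (mulm q (tau_l l p W)) =
  (#|T|%:R)^-1 * \sum_t \sum_xs \sum_ys pprod xs * pprod ys *
     trm (mulm (Wpow (W t) ys) (qblock xs)).
Proof.
rewrite (@trm_avg_conj _ (fun t _ i j => \sum_ys pprod ys * Wpow (W t) ys i j)); last first.
  by move=> t xs ii xs' ii'; rewrite tpow_hsigma_t_entry.
congr (_ * _); apply: eq_bigr => t _; apply: eq_bigr => xs _.
rewrite mulm_suml trm_sum mulr_sumr; apply: eq_bigr => ys _.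
rewrite -mulrA; congr (_ * _); rewrite /trm /mulm mulr_sumr; apply: eq_bigr => i _.
by rewrite mulr_sumr; apply: eq_bigr => j _; rewrite mulrA.
Qed.

End ReorderedStates.

Section RandomCodebook.
Variable R : realType.
Local Notation C := R[i].
Variable Y : finType.
Variable py : Y -> C.
Hypothesis py1 : \sum_y py y = 1.
Variable M : nat.

Definition pcode (c : M.-tuple Y) := \prod_m py (tnth c m).

Lemma sum_pcode_prod (G : 'I_M -> Y -> C) :
  \sum_c pcode c * \prod_m G m (tnth c m) = \prod_m \sum_y py y * G m y.
Proof.
rewrite -(sum_tuple_prod (fun m y => py y * G m y)).
by apply: eq_bigr => c _; rewrite big_split.
Qed.

Lemma sum_pcode : \sum_c pcode c = 1.
Proof.
by rewrite /pcode (sum_tuple_prod (fun _ y => py y)) big1.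
Qed.

Lemma sum_pcode_tnth (m0 : 'I_M) (f : Y -> C) :
  \sum_c pcode c * f (tnth c m0) = \sum_y py y * f y.
Proof.
pose G m := if m == m0 then f else fun _ => 1.
have hG (c : M.-tuple Y) : \prod_m G m (tnth c m) = f (tnth c m0).
  by rewrite (bigD1 m0) //= /G eqxx big1 ?mulr1 // => m /negbTE ->.
under eq_bigr do rewrite -hG.
rewrite sum_pcode_prod (bigD1 m0) //= /G eqxx [X in _ * X]big1 ?mulr1 // => m /negbTE ->.
by under eq_bigr do rewrite mulr1.
Qed.

Lemma sum_pcode_tnth_mul (m0 m1 : 'I_M) (f g : Y -> C) : m0 != m1 ->
  \sum_c pcode c * (f (tnth c m0) * g (tnth c m1)) =
  (\sum_x py x * f x) * (\sum_y py y * g y).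
Proof.
move=> ne.
pose G m := if m == m0 then f else if m == m1 then g else fun _ => 1.
have others m : (m != m0) && (m != m1) -> G m = fun _ => 1.
  by case/andP => /negbTE h0 /negbTE h1; rewrite /G h0 h1.
have ne' : m1 != m0 by rewrite eq_sym.
have split_prod (F : 'I_M -> C) : \prod_m F m =
    F m0 * (F m1 * \prod_(m | (m != m0) && (m != m1)) F m).
  by rewrite (bigD1 m0) //= (bigD1 m1) //=; under [in RHS]eq_bigr do rewrite andbC.
have hG (c : M.-tuple Y) : \prod_m G m (tnth c m) = f (tnth c m0) * g (tnth c m1).
  rewrite split_prod big1 => [|m /others -> //].
  by rewrite mulr1 /G eqxx (negbTE ne') eqxx.
under eq_bigr do rewrite -hG.
rewrite sum_pcode_prod split_prod [X in _ * (_ * X)]big1 => [|m /others ->]; last first.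
  by under eq_bigr do rewrite mulr1.
by rewrite mulr1 /G eqxx (negbTE ne') eqxx.
Qed.

Lemma sum_pcode_pair (m0 m1 : 'I_M) (h : Y -> Y -> C) : m0 != m1 ->
  \sum_c pcode c * h (tnth c m0) (tnth c m1) = \sum_x \sum_y py x * py y * h x y.
Proof.
move=> ne.
have hd a b : h a b = \sum_x \sum_y (a == x)%:R * ((b == y)%:R * h x y).
  rewrite (eq_bigr (fun x => (x == a)%:R * h x b)) ?sum_delta // => x _.
  rewrite -mulr_sumr eq_sym; congr (_ * _).
  by rewrite (eq_bigr (fun y => (y == b)%:R * h x y)) ?sum_delta // => y _; rewrite eq_sym.
under eq_bigr do rewrite hd mulr_sumr.
rewrite exchange_big /=; apply: eq_bigr => x _.
under eq_bigr do rewrite mulr_sumr.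
rewrite exchange_big /=; apply: eq_bigr => y _.
have e : \sum_c pcode c * ((tnth c m0 == x)%:R * ((tnth c m1 == y)%:R * h x y)) =
    (\sum_c pcode c * ((tnth c m0 == x)%:R * (tnth c m1 == y)%:R)) * h x y.
  by rewrite mulr_suml; apply: eq_bigr => c _; ring.
rewrite e (sum_pcode_tnth_mul (fun a => (a == x)%:R) (fun b => (b == y)%:R) ne).
under eq_bigr do rewrite mulrC; rewrite sum_delta.
by under eq_bigr do rewrite mulrC; rewrite sum_delta.
Qed.

End RandomCodebook.

Lemma exists_le_expectation (R : realType) (K : finType) (pi phi : K -> R[i]) :
  (forall k, 0 <= pi k) -> \sum_k pi k = 1 -> (forall k, 0 <= phi k) ->
  exists k, phi k <= \sum_k pi k * phi k.
Proof.
move=> hpi h1 hphi; set E := \sum_k pi k * phi k.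
have [/existsP [k hk]|/existsPn hall] := boolP [exists k, phi k <= E]; first by exists k.
exfalso.
have lt k : E < phi k.
  by rewrite real_ltNge ?ger0_real ?hall // sumr_ge0 // => k' _; apply: mulr_ge0.
have [/existsP [k1 hk1]|/existsPn hz] := boolP [exists k, 0 < pi k]; last first.
  suff : \sum_k pi k = 0 by rewrite h1 => /eqP; rewrite oner_eq0.
  apply: big1 => k _; have := hpi k.
  by rewrite le_eqVlt (negbTE (hz k)) orbF => /eqP <-.
have : 0 < \sum_k pi k * (phi k - E).
  rewrite (bigD1 k1) //=; apply: ltr_wpDr.
    by apply: sumr_ge0 => k _; apply: mulr_ge0 => //; rewrite subr_ge0 ltW.
  by apply: mulr_gt0 => //; rewrite subr_gt0.
under eq_bigr do rewrite mulrBr.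
by rewrite sumrB -mulr_suml h1 mul1r subrr ltxx.
Qed.

Section PrettyGoodMeasurement.
Variable R : realType.
Local Notation C := R[i].
Variables (X T : finType) (d l : nat).
Local Notation N := (l.-tuple 'I_d).
Local Notation Xl := (l.-tuple X).
Local Notation I1 := (@idm R N).
Variable W : T -> X -> mat R 'I_d 'I_d.
Variable q : mat R (Xl * N)%type (Xl * N)%type.
Hypothesis hW : forall t x, is_state (W t x).
Hypothesis hq : is_proj q.

Lemma psd_Wpow t (xs : Xl) : psd (Wpow (W t) xs).
Proof. by apply: psd_tprod => k; case: (hW t (tnth xs k)). Qed.

Lemma trm_Wpow t (xs : Xl) : trm (Wpow (W t) xs) = 1.
Proof. by rewrite /Wpow trm_tprod big1 // => k _; case: (hW t (tnth xs k)). Qed.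

Lemma psd_qblock (xs : Xl) : psd (qblock q xs).
Proof. exact: (psd_block xs (proj_psd hq).1). Qed.

Lemma psd_qblock_compl (xs : Xl) : psd (subm I1 (qblock q xs)).
Proof.
have -> : subm I1 (qblock q xs) =
    fun i j => subm (@idm R (Xl * N)%type) q (xs, i) (xs, j).
  by apply: matP => i j; rewrite /subm /idm /qblock xpair_eqE eqxx.
exact: (psd_block xs (proj_psd hq).2).
Qed.

Definition overlap t (x y : Xl) := trm (mulm (Wpow (W t) x) (qblock q y)).

Lemma overlap_ge0 t (x y : Xl) : 0 <= overlap t x y.
Proof. exact: trm_psd_ge0 (psd_Wpow t x) (psd_qblock y). Qed.

Variable M : nat.

Definition codeword_err_bound t (c : M.-tuple Xl) (m : 'I_M) :=
  2 - 2 * overlap t (tnth c m) (tnth c m) +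
  4 * \sum_(j | j != m) overlap t (tnth c m) (tnth c j).

Section Decoder.
Variable c : M.-tuple Xl.
Local Notation A := (fun i j => \sum_m qblock q (tnth c m) i j).
Variables B Q : mat R N N.
Hypotheses (B_adj : adjm B = B) (Q_psd : psd Q) (QQ : mulm Q Q = A).
Hypotheses (BA : mulm B A = Q) (AB : mulm A B = Q).
Hypothesis BAB_le1 : psd (subm I1 (mulm (mulm B A) B)).

Definition pgm (m : 'I_M) := mulm (mulm B (qblock q (tnth c m))) B.

Lemma psd_pgm m : psd (pgm m).
Proof. by rewrite /pgm -{1}B_adj; apply/psd_conj/psd_qblock. Qed.

Lemma sum_pgm (P : pred 'I_M) :
  (fun i j => \sum_(m | P m) pgm m i j) =
  mulm (mulm B (fun i j => \sum_(m | P m) qblock q (tnth c m) i j)) B.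
Proof. by rewrite mulm_sumr mulm_suml. Qed.

Lemma pgm_is_code : is_code (fun m => tnth c m) pgm.
Proof. by split; [exact: psd_pgm | rewrite (sum_pgm predT)]. Qed.

Lemma codeword_err_pgm t m :
  0 <= trm (mulm (Wpow (W t) (tnth c m)) (subm I1 (pgm m))) /\
  trm (mulm (Wpow (W t) (tnth c m)) (subm I1 (pgm m))) <= codeword_err_bound t c m.
Proof.
split.
  apply: trm_psd_ge0; first exact: psd_Wpow.
  have -> : subm I1 (pgm m) = addm (subm I1 (mulm (mulm B A) B))
      (fun i j => \sum_(j0 | j0 != m) pgm j0 i j).
    rewrite -(sum_pgm predT); apply: matP => i j.
    by rewrite /subm /addm (bigD1 m) //=; ring.
  by apply: psdD => //; apply: psd_sum; apply: psd_pgm.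
pose Tm := fun i j => \sum_(j0 | j0 != m) qblock q (tnth c j0) i j.
have AST : A = addm (qblock q (tnth c m)) Tm.
  by apply: matP => i j; rewrite /addm /Tm (bigD1 m).
have hHN := hayashi_nagaoka B_adj Q_psd QQ BA AB BAB_le1 (psd_qblock _)
  (psd_qblock_compl _) (psd_sum _ (fun j0 => psd_qblock (tnth c j0))) AST.
have := trm_psd_ge0 (psd_Wpow t (tnth c m)) hHN.
rewrite mulmBr trmB subr_ge0 -/(pgm m) => hle; apply: le_trans hle _.
rewrite mulmDr !mulmZr mulmBr trmD !trmZ trmB mulm1 trm_Wpow mulm_sumr trm_sum.
by rewrite /codeword_err_bound mulrBr mulr1.
Qed.

End Decoder.

Definition code_err_bound t (c : M.-tuple Xl) :=
  (M%:R)^-1 * \sum_m codeword_err_bound t c m.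

Lemma exists_pgm_code (c : M.-tuple Xl) : exists D : 'I_M -> mat R N N,
  is_code (fun m => tnth c m) D /\
  forall t, 0 <= avg_err (W t) (fun m => tnth c m) D /\
            avg_err (W t) (fun m => tnth c m) D <= code_err_bound t c.
Proof.
have [B [Q [[B_adj Q_psd QQ BA AB] BAB_le1]]] :=
  psd_sqrt_pinv (psd_sum predT (fun m => psd_qblock (tnth c m))).
exists (pgm c B); split; first exact: pgm_is_code.
move=> t; have err := codeword_err_pgm B_adj Q_psd QQ BA AB BAB_le1 t.
have M_ge0 : 0 <= (M%:R : C)^-1 by rewrite invr_ge0 ler0n.
split; first by apply/mulr_ge0/sumr_ge0 => // m _; case: (err m).
by apply/ler_wpM2l/ler_sum => // m _; case: (err m).
Qed.

End PrettyGoodMeasurement.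

Section ExpectedError.
Variable R : realType.
Local Notation C := R[i].
Variables (X T : finType) (d l : nat).
Local Notation N := (l.-tuple 'I_d).
Local Notation Xl := (l.-tuple X).
Variable W : T -> X -> mat R 'I_d 'I_d.
Variable q : mat R (Xl * N)%type (Xl * N)%type.
Hypothesis hW : forall t x, is_state (W t x).
Hypothesis hq : is_proj q.
Variable p : X -> R.
Hypothesis hp : is_distr p.

Lemma pprod_ge0 (xs : Xl) : 0 <= pprod p xs.
Proof. by apply: prodr_ge0 => k _; rewrite ler0c; exact: hp.1. Qed.

Lemma sum_pprod : \sum_(xs : Xl) pprod p xs = 1.
Proof.
rewrite /pprod (sum_tuple_prod (fun _ x => (p x)%:C%C)) big1 // => k _.
by rewrite -(rmorph_sum (real_complex R)) /= hp.2.
Qed.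

Definition alpha t := \sum_(x : Xl) pprod p x * overlap W q t x x.
Definition beta t := \sum_(x : Xl) \sum_(y : Xl) pprod p x * pprod p y * overlap W q t x y.

Lemma beta_ge0 t : 0 <= beta t.
Proof.
apply: sumr_ge0 => x _; apply: sumr_ge0 => y _.
by apply: mulr_ge0; [apply: mulr_ge0; apply: pprod_ge0 | apply: overlap_ge0].
Qed.

Variable M : nat.
Hypothesis M_gt0 : (0 < M)%N.

(* Distinct codewords are independent, so each of the M - 1 cross terms averages to beta. *)
Lemma expected_codeword_err t (m : 'I_M) :
  \sum_(c : M.-tuple Xl) pcode (pprod p) c * codeword_err_bound W q t c m <=
  2 - 2 * alpha t + 4 * (M%:R * beta t).
Proof.
have e c : pcode (pprod p) c * codeword_err_bound W q t c m =
    2 * pcode (pprod p) c - 2 * (pcode (pprod p) c * overlap W q t (tnth c m) (tnth c m)) +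
    4 * \sum_(j | j != m) pcode (pprod p) c * overlap W q t (tnth c m) (tnth c j).
  by rewrite /codeword_err_bound -mulr_sumr; ring.
under eq_bigr do rewrite e.
rewrite big_split sumrB /= -!mulr_sumr (sum_pcode sum_pprod).
rewrite (sum_pcode_tnth sum_pprod m (fun x => overlap W q t x x)) -/(alpha t).
rewrite exchange_big /= (eq_bigr (fun _ => beta t)) => [|j hj]; last first.
  by rewrite (sum_pcode_pair sum_pprod (overlap W q t)) // eq_sym.
rewrite mulr1 lerD2l ler_wpM2l ?ler0n //.
rewrite (_ : M%:R * beta t = \sum_(j < M) beta t); last first.
  by rewrite sumr_const card_ord mulr_natl.
rewrite [X in _ <= X](bigD1 m) //= lerDr.
exact: beta_ge0.
Qed.

Lemma expected_code_err t :
  \sum_(c : M.-tuple Xl) pcode (pprod p) c * code_err_bound W q t c <=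
  2 - 2 * alpha t + 4 * (M%:R * beta t).
Proof.
rewrite /code_err_bound.
under eq_bigr do rewrite mulrCA mulr_sumr.
rewrite -mulr_sumr exchange_big /=.
apply: le_trans (ler_wpM2l _ (ler_sum _ (fun m _ => expected_codeword_err t m))) _.
  by rewrite invr_ge0 ler0n.
rewrite sumr_const card_ord; set b := (2 - _ + _).
by rewrite -(mulr_natl b) mulrA mulVf ?mul1r // pnatr_eq0 -lt0n.
Qed.

Lemma exists_good_code : exists (x : 'I_M -> Xl) (D : 'I_M -> mat R N N),
  is_code x D /\
  forall t, avg_err (W t) x D <= \sum_t (2 - 2 * alpha t + 4 * (M%:R * beta t)).
Proof.
have [Df hDf] := fin_all_exists (exists_pgm_code hW hq (M := M)).
have bound_ge0 t (c : M.-tuple Xl) : 0 <= code_err_bound W q t c.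
  by case: ((hDf c).2 t) => h0 h1; apply: le_trans h0 h1.
have pcode_ge0 (c : M.-tuple Xl) : 0 <= pcode (pprod p) c.
  by apply: prodr_ge0 => m _; apply: pprod_ge0.
have [c0 hc0] := exists_le_expectation (phi := fun c => \sum_t code_err_bound W q t c)
  pcode_ge0 (sum_pcode sum_pprod M) (fun c => sumr_ge0 _ (fun t _ => bound_ge0 t c)).
exists (fun m => tnth c0 m), (Df c0); split; first exact: (hDf c0).1.
move=> t; apply: le_trans (proj2 ((hDf c0).2 t)) _.
apply: le_trans (_ : code_err_bound W q t c0 <= \sum_t code_err_bound W q t c0) _.
  by rewrite (bigD1 t) //= lerDl; apply: sumr_ge0 => t' _; apply: bound_ge0.
apply: le_trans hc0 _.
under eq_bigr do rewrite mulr_sumr.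
by rewrite exchange_big; apply: ler_sum => t' _; apply: expected_code_err.
Qed.

Lemma trm_rho_l_alpha : trm (mulm q (rho_l l p W)) = (#|T|%:R)^-1 * \sum_t alpha t.
Proof. exact: trm_rho_l. Qed.

Lemma trm_tau_l_beta : trm (mulm q (tau_l l p W)) = (#|T|%:R)^-1 * \sum_t beta t.
Proof.
rewrite trm_tau_l; congr (_ * _); apply: eq_bigr => t _.
rewrite /beta exchange_big; apply: eq_bigr => y _; apply: eq_bigr => x _.
by rewrite [pprod p y * _]mulrC.
Qed.

End ExpectedError.

Lemma random_coding_arith (F : numFieldType) (n M lam sa sb e g : F) :
  0 < n -> 0 <= M -> n * (1 - lam) <= sa -> sb <= n * e -> M * e <= g ->
  2 * n - 2 * sa + 4 * (M * sb) <= n * (2 * lam + 4 * g).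
Proof.
move=> n_gt0 M_ge0 hsa hsb hMe.
have h1 : 2 * n - 2 * sa <= n * (2 * lam).
  have -> : n * (2 * lam) = 2 * n - 2 * (n * (1 - lam)) by ring.
  by rewrite lerD2l lerN2 ler_wpM2l ?ler0n.
have h2 : 4 * (M * sb) <= n * (4 * g).
  have -> : n * (4 * g) = 4 * (n * g) by ring.
  rewrite ler_wpM2l ?ler0n //; apply: le_trans (ler_wpM2l M_ge0 hsb) _.
  by rewrite mulrCA; apply: ler_wpM2l => //; apply: ltW.
by rewrite mulrDr; apply: lerD.
Qed.

Lemma truncn_powR2_gt0 (R : realType) (x : R) : 0 <= x -> (0 < Num.truncn (powR 2 x))%N.
Proof.
move=> x_ge0; rewrite truncn_gt0; apply: le_trans (_ : powR 2 0 <= _).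
  by rewrite powRr0.
by apply: ler_powR => //; rewrite ler1n.
Qed.

Theorem lemma1 (R : realType) (X T : finType) (d : nat)
  (W : T -> X -> mat R 'I_d 'I_d) (p : X -> R) (l : nat) :
  (forall t x, is_state (W t x)) ->
  is_distr p ->
  forall (lam a : R), 0 <= lam <= 1 -> 0 < a ->
  forall q : mat R (l.-tuple X * l.-tuple 'I_d)%type (l.-tuple X * l.-tuple 'I_d)%type,
    is_proj q ->
    ((1 - lam)%:C)%C <= trm (mulm q (rho_l l p W)) ->
    trm (mulm q (tau_l l p W)) <= ((powR 2 (- (l%:R * a)))%:C)%C ->
  forall gam : R, 0 < gam <= a ->
  let M := Num.truncn (powR 2 (l%:R * (a - gam))) in
  exists (x : 'I_M -> l.-tuple X)
         (D : 'I_M -> mat R (l.-tuple 'I_d) (l.-tuple 'I_d)),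
    is_code x D /\
    forall t : T,
      avg_err (W t) x D
        <= ((#|T|%:R * (2 * lam + 4 * powR 2 (- (l%:R * gam))))%:C)%C.
Proof.
move=> hW hp lam a _ _ q hq hrho htau gam /andP [_ gam_le_a] M.
have M_gt0 : (0 < M)%N.
  by apply: truncn_powR2_gt0; rewrite mulr_ge0 ?ler0n // subr_ge0.
have [x [D [hcode herr]]] := exists_good_code hW hq hp M_gt0.
exists x, D; split => // t; apply: le_trans (herr t) _.
have n_gt0 : 0 < (#|T|%:R : R[i]) by rewrite ltr0n; apply/card_gt0P; exists t.
rewrite trm_rho_l_alpha ler_pdivlMl // rmorphB rmorph1 in hrho.
rewrite trm_tau_l_beta ler_pdivrMl // in htau.
have hMe : M%:R * (powR 2 (- (l%:R * a)))%:C%C <= (powR 2 (- (l%:R * gam)))%:C%C.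
  rewrite -(rmorph_nat (real_complex R)) -rmorphM lecR.
  have -> : powR 2 (- (l%:R * gam)) = powR 2 (l%:R * (a - gam)) * powR 2 (- (l%:R * a)).
    by rewrite -powRD ?pnatr_eq0 ?implybT //; congr powR; ring.
  by apply: ler_wpM2r; [exact: powR_ge0 | rewrite truncn_le powR_ge0].
rewrite big_split sumrB sumr_const /= -!mulr_sumr.
rewrite -[2 *+ _]mulr_natr.
rewrite rmorphM rmorph_nat rmorphD !rmorphM !rmorph_nat.
exact: random_coding_arith (ler0n _ _) hrho htau hMe.
Qed.
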